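(* In $\mathbb{Z}[Q_1,\dots,Q_{n-1}][z_1,\dots,z_n,\eta_1,\dots,\eta_n]$, with $s_\theta=(1\,n)\in S_n$, $$\mathfrak G^Q_{s_\theta}(z|\eta)=\mathfrak G^Q_{s_1s_2\cdots s_{n-1}}(z|\eta)\cdot\mathfrak G^Q_{s_{n-2}\cdots s_2s_1}(z|\omega^{(\eta)}\eta),$$ where $\mathfrak G^Q_w(z|\omega^{(\eta)}\eta)$ is obtained from $\mathfrak G^Q_w(z|\eta)$ by the substitution $\eta_i\mapsto\eta_{i+1}$ ($\eta_{n+1}=\eta_1$).
   Context: Fix $n\ge3$. With the convention $Q_n:=0$, for $0\le m\le i\le n$ put $F^{(i)}_m=\sum_{J\subset\{1,\dots,i\},|J|=m}\prod_{j\in J,\,j+1\notin J}(1-Q_j)\prod_{j\in J}z_j$. Let $s_i^{(\eta)}$ swap $\eta_i,\eta_{i+1}$, $x\ominus y=(x-y)/(1-y)$, and $D^Q_i=1+\frac{s_i^{(\eta)}-1}{\eta_{i+1}\ominus\eta_i}$ ($1\le i\le n-1$) acting on the polynomial ring $\mathbb{Z}[Q_1,\dots,Q_{n-1}][z_1,\dots,z_n,\eta_1,\dots,\eta_n]$ (fixing $z$, $Q$). Let $\psi_i=\sum_{j=0}^i(-1)^j(1-\eta_{n-i})^jF^{(i)}_j$. The quantum double Grothendieck polynomials $\mathfrak G^Q_w(z|\eta)$, $w\in S_n$, are the unique family with $\mathfrak G^Q_{w_\circ}=\prod_{i=1}^{n-1}\psi_i$ ($w_\circ$ the longest element) and $D^Q_i\mathfrak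 G^Q_w=\mathfrak G^Q_{s_iw}$ if $s_iw<w$, $D^Q_i\mathfrak G^Q_w=\mathfrak G^Q_w$ if $s_iw>w$. *)

From HB Require Import structures.
From mathcomp Require Import all_boot all_order all_algebra all_fingroup.
From mathcomp Require Import fraction.
From mathcomp Require Import mpoly.

Set Implicit Arguments.
Unset Strict Implicit.
Unset Printing Implicit Defensive.

Import GRing.Theory.
Local Open Scope ring_scope.
Notation "x %:F" := (@FracField.tofrac _ x) : ring_scope.

(* The ring Z[Q_1,...,Q_{n-1}][z_1,...,z_n,eta_1,...,eta_n]:
   coefficients in Z[Q] (n-1 variables, Q_j = 'X_(j-1)),
   outer variables: z_i = 'X_(lshift n (i-1)),  eta_i = 'X_(rshift n (i-1)). *)
Definition QRing (n : nat) := {mpoly int[n.-1]}.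
Definition Ring (n : nat) := {mpoly (QRing n)[n + n]}.

(* 1-based variables; out of range indices give 0 (never used in range). *)
Definition Qv (n j : nat) : Ring n :=
  if @insub nat (fun k => k < n.-1)%N _ j.-1 is Some a then ('X_a : QRing n)%:MP
  else 0.   (* in particular Q_n := 0 *)
Definition zv (n i : nat) : Ring n :=
  if @insub nat (fun k => k < n)%N _ i.-1 is Some a then 'X_(lshift n a) else 0.
Definition eta (n i : nat) : Ring n :=
  if @insub nat (fun k => k < n)%N _ i.-1 is Some a then 'X_(rshift n a) else 0.

Definition tr (n a b : nat) : 'S_n :=
  match @insub nat (fun k => k < n)%N _ a.-1, @insub nat (fun k => k < n)%N _ b.-1 with
  | Some x, Some y => tperm x y
  | _, _ => 1%g
  end.
Definition sr (n i : nat) : 'S_n := tr n i i.+1.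

(* composition of permutations as functions: (pcomp u v) x = u (v x) *)
Definition pcomp (n : nat) (u v : 'S_n) : 'S_n := (v * u)%g.

Definition plen (n : nat) (w : 'S_n) : nat :=
  #|[set p : 'I_n * 'I_n | (p.1 < p.2)%N && (w p.2 < w p.1)%N]|.

Definition w0 (n : nat) : 'S_n := perm (@rev_ord_inj n).

(* substitution eta_k |-> eta_{f k} (0-based on 'I_n), fixing z and Q *)
Definition etasub (n : nat) (f : 'I_n -> 'I_n) (p : Ring n) : Ring n :=
  p \mPo [tuple (match split k with
                 | inl i => 'X_(lshift n i)
                 | inr j => 'X_(rshift n (f j)) end : Ring n) | k < n + n].

Definition s_eta (n i : nat) (p : Ring n) : Ring n := etasub (sr n i) p.
Definition omega_eta (n : nat) (p : Ring n) : Ring n := etasub (@ordS n) p.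

(* D^Q_i = 1 + (s_i^{(eta)} - 1)/(eta_{i+1} (-) eta_i), x (-) y = (x-y)/(1-y),
   computed in the fraction field of the polynomial ring. *)
Definition DQ (n i : nat) (f : Ring n) : {fraction Ring n} :=
  f%:F + ((@s_eta n i f)%:F - f%:F) /
         ((eta n i.+1 - eta n i)%:F / (1 - eta n i)%:F).

(* F^{(i)}_m, J ranging over subsets of {1,...,i} (encoded as {set 'I_i},
   a : 'I_i standing for a+1) *)
Definition Fpol (n i m : nat) : Ring n :=
  \sum_(J : {set 'I_i} | #|J| == m)
     (\prod_(a in J | [forall b in J, val b != (val a).+1]) (1 - Qv n (val a).+1))
     * \prod_(a in J) zv n (val a).+1.

Definition psi (n i : nat) : Ring n :=
  \sum_(j < i.+1) (-1) ^+ j * (1 - eta n (n - i)) ^+ j * Fpol n i j.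

Definition Gtop (n : nat) : Ring n := \prod_(1 <= i < n) psi n i.

Definition is_QGroth (n : nat) (G : 'S_n -> Ring n) : Prop :=
  G (w0 n) = Gtop n /\
  forall (i : nat), (1 <= i)%N -> (i <= n.-1)%N -> forall w : 'S_n,
    if (plen (pcomp (sr n i) w) < plen w)%N
    then @DQ n i (G w) = (G (pcomp (sr n i) w))%:F
    else @DQ n i (G w) = (G w)%:F.

Definition sprod (n : nat) (l : seq nat) : 'S_n :=
  foldr (fun i acc => pcomp (sr n i) acc) 1%g l.

(* Put y_k = 1 - eta_k.  Since eta_(i+1) (-) eta_i = (y_i - y_(i+1)) / y_i, the operator
   D^Q_i is the isobaric divided difference f |-> (y_i s_i f - y_(i+1) f) / (y_i - y_(i+1)),
   and psi_i is a polynomial of degree i in y_(n-i) alone, with coefficients free of eta.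
   The key computation: applying D^Q_(s+1), ..., D^Q_(s+K+1) in turn to y_(s+1)^p f, where f
   is a polynomial in y_(s+2), ..., y_(s+K+1) of staircase degrees, gives f with every index
   lowered by one if p = 0, and 0 otherwise; it reduces to D^Q_i on monomials
   y_i^p y_(i+1)^a.  Since D^Q_i f has at most one polynomial value, G^Q_w can be computed
   along any chain of length-decreasing left multiplications by simple reflections starting
   from w_o.  Now G^Q_(w_o) = psi_(n-1)(y_1) omega(P) with P = psi_(n-2)(y_1) ... psi_1(y_(n-2)),
   and psi_(n-1)(y_1) is symmetric in y_2, ..., y_n.  Descending from w_o along the longest
   element of <s_2, ..., s_(n-1)> reaches s_1 ... s_(n-1) and reduces omega(P) to 1.
   Descending along the longest element of <s_2, ..., s_(n-2)> reaches (1 n) and turns omega(P)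
   into omega(G^Q_(s_(n-2) ... s_1)): indeed P is the value of G^Q at s_(n-1) ... s_1 w_o, from
   which the longest element of <s_1, ..., s_(n-3)> descends to s_(n-2) ... s_1. *)

From Pilot Require Import Defs.
From HB Require Import structures.
From mathcomp Require Import all_boot all_order all_algebra all_fingroup.
From mathcomp Require Import fraction mpoly zify ring.

Set Implicit Arguments.
Unset Strict Implicit.
Unset Printing Implicit Defensive.
Import GRing.Theory.

Ltac lia_ifs := repeat case: ifP; intros; lia.

Definition swap_pos (i m : nat) : nat :=
  if m == i.-1 then i else if m == i then i.-1 else m.

Definition act_word (l : seq nat) (m : nat) : nat := foldl (fun m i => swap_pos i m) m l.

(* [lmul_word [:: i_1; ...; i_k] w = s_(i_k) ... s_(i_1) w] *)
Definition lmul_word n (l : seq nat) (w : 'S_n) : 'S_n :=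
  foldl (fun v i => Defs.pcomp (sr n i) v) w l.

Definition valid_word n (l : seq nat) : bool := all (fun i => 1 <= i < n)%N l.

(* A reduced word of the longest permutation of the positions [s+1, ..., s+M]. *)
Fixpoint w0_word (s M : nat) : seq nat :=
  if M is M'.+1 then iota s.+1 M' ++ w0_word s M' else [::].

Lemma tr_val n a b (x : 'I_n) : (1 <= a <= n)%N -> (1 <= b <= n)%N ->
  val (tr n a b x) = if val x == a.-1 then b.-1 else if val x == b.-1 then a.-1 else val x.
Proof.
move=> ha hb; have pa : (a.-1 < n)%N by lia.
have pb : (b.-1 < n)%N by lia.
rewrite /tr (insubT (fun k => k < n)%N pa) (insubT (fun k => k < n)%N pb).
case: tpermP => [->|->|/eqP xa /eqP xb] /=; [by lia_ifs | by lia_ifs |].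
have /negPf -> : val x != a.-1 by apply: contra xa => /eqP xa; apply/eqP/val_inj.
by have /negPf -> : val x != b.-1 by apply: contra xb => /eqP xb; apply/eqP/val_inj.
Qed.

Lemma sr_val n i (x : 'I_n) : (1 <= i < n)%N -> val (sr n i x) = swap_pos i (val x).
Proof. by move=> hi; rewrite /sr tr_val //; lia. Qed.

Lemma perm_valP n (u v : 'S_n) : (forall x : 'I_n, val (u x) = val (v x)) -> u = v.
Proof. by move=> uv; apply/permP => x; apply/val_inj. Qed.

Lemma w0_val n (x : 'I_n) : val (w0 n x) = (n - 1 - val x)%N.
Proof. by rewrite /w0 permE /=; lia. Qed.

Lemma valid_cat n l1 l2 : valid_word n (l1 ++ l2) = valid_word n l1 && valid_word n l2.
Proof. exact: all_cat. Qed.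

Lemma valid_rev n l : valid_word n (rev l) = valid_word n l.
Proof. exact: all_rev. Qed.

Lemma valid_iota n a k : (1 <= a)%N -> (a + k <= n)%N -> valid_word n (iota a k).
Proof. by move=> a_ge1 ak_le; apply/allP => i; rewrite mem_iota; lia. Qed.

Lemma mem_w0_word s M i : i \in w0_word s M -> (s < i < s + M)%N.
Proof.
elim: M => [|M IH] //=; rewrite mem_cat mem_iota => /orP [|/IH]; lia.
Qed.

Lemma valid_w0_word n s M : (s + M <= n)%N -> valid_word n (w0_word s M).
Proof. by move=> sM_le; apply/allP => i /mem_w0_word; lia. Qed.

Lemma size_w0_word s M : size (w0_word s M) = 'C(M, 2).
Proof. by elim: M => [|M IH] //=; rewrite size_cat size_iota IH binS bin1 addnC. Qed.

Lemma lmul_word_val n l (w : 'S_n) x : valid_word n l ->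
  val (lmul_word l w x) = act_word l (val (w x)).
Proof.
elim: l w => [|i l IH] w //= /andP [hi hl].
by rewrite IH // /Defs.pcomp permM sr_val.
Qed.

Lemma sprod_val n l x : valid_word n l -> val (sprod n l x) = act_word (rev l) (val x).
Proof.
elim: l x => [|i l IH] x /=; first by rewrite perm1.
move=> /andP [hi hl]; rewrite /Defs.pcomp permM sr_val // IH //.
by rewrite rev_cons /act_word foldl_rcons.
Qed.

Lemma lmul_word_cat n l1 l2 (w : 'S_n) : lmul_word (l1 ++ l2) w = lmul_word l2 (lmul_word l1 w).
Proof. exact: foldl_cat. Qed.

Lemma act_word_cat l1 l2 m : act_word (l1 ++ l2) m = act_word l2 (act_word l1 m).
Proof. exact: foldl_cat. Qed.

Lemma act_word_iota a k m : (1 <= a)%N -> act_word (iota a k) m =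
  if m == a.-1 then (a.-1 + k)%N else if (a <= m < a + k)%N then m.-1 else m.
Proof.
move=> a_ge1; elim: k => [|k IH]; first by rewrite /=; lia_ifs.
by rewrite -addn1 iotaD act_word_cat IH /= /swap_pos; lia_ifs.
Qed.

Lemma act_word_rev_iota a k m : (1 <= a)%N -> act_word (rev (iota a k)) m =
  if m == (a.-1 + k)%N then a.-1 else if (a.-1 <= m < a.-1 + k)%N then m.+1 else m.
Proof.
move=> a_ge1; elim: k m => [|k IH] m; first by rewrite /=; lia_ifs.
by rewrite -addn1 iotaD rev_cat act_word_cat IH /= /swap_pos; lia_ifs.
Qed.

Lemma act_w0_word s M m : act_word (w0_word s M) m =
  if (s <= m < s + M)%N then (s + s + M - 1 - m)%N else m.
Proof.
elim: M m => [|M IH] m /=; first by lia_ifs.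
by rewrite act_word_cat IH act_word_iota //=; lia_ifs.
Qed.

Lemma w0_word_shift s M : w0_word s.+1 M = map S (w0_word s M).
Proof.
elim: M => [|M IH] //=; rewrite map_cat IH; congr (_ ++ _).
by rewrite -add1n iotaDl; apply: eq_map => x; rewrite add1n.
Qed.

Section LongestElementWords.
Variable n : nat.
Hypothesis n_ge3 : (3 <= n)%N.

Lemma lmul_w0_sprod_rev_iota :
  lmul_word (iota 1 n.-1 ++ w0_word 0 (n - 2)) (w0 n) = sprod n (rev (iota 1 (n - 2))).
Proof.
apply: perm_valP => x.
rewrite lmul_word_val; last by rewrite valid_cat valid_iota ?valid_w0_word //; lia.
rewrite sprod_val; last by rewrite valid_rev valid_iota //; lia.
rewrite revK w0_val act_word_cat act_w0_word !act_word_iota //=.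
by have := ltn_ord x; lia_ifs.
Qed.

Lemma lmul_w0_tr : lmul_word (w0_word 1 (n - 2)) (w0 n) = tr n 1 n.
Proof.
apply: perm_valP => x.
rewrite lmul_word_val; last by rewrite valid_w0_word //; lia.
rewrite tr_val; try lia.
by rewrite w0_val act_w0_word /=; have := ltn_ord x; lia_ifs.
Qed.

Lemma lmul_w0_sprod_iota : lmul_word (w0_word 1 n.-1) (w0 n) = sprod n (iota 1 n.-1).
Proof.
apply: perm_valP => x.
rewrite lmul_word_val; last by rewrite valid_w0_word //; lia.
rewrite sprod_val; last by rewrite valid_iota //; lia.
by rewrite w0_val act_w0_word act_word_rev_iota //=; have := ltn_ord x; lia_ifs.
Qed.

Lemma tr_sprod : tr n 1 n = sprod n (iota 1 n.-1 ++ rev (iota 1 (n - 2))).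
Proof.
apply: perm_valP => x.
rewrite sprod_val; last by rewrite valid_cat valid_rev !valid_iota //; lia.
rewrite tr_val; try lia.
rewrite rev_cat revK act_word_cat act_word_iota // act_word_rev_iota //=.
by have := ltn_ord x; lia_ifs.
Qed.

End LongestElementWords.

Lemma swap_pos_inversion i x y : (1 <= i)%N -> x != y ->
  (swap_pos i y < swap_pos i x)%N -> ~~ (y < x)%N -> x = i.-1 /\ y = i.
Proof. by rewrite /swap_pos => i_ge1 /eqP; lia_ifs. Qed.

Lemma sr_invol n i : (sr n i * sr n i)%g = 1%g.
Proof.
rewrite /sr /tr; case: insub => [x|]; last by rewrite mulg1.
by case: insub => [y|]; [exact: tperm2 | rewrite mulg1].
Qed.

Lemma pcomp_srK n i (w : 'S_n) : Defs.pcomp (sr n i) (Defs.pcomp (sr n i) w) = w.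
Proof. by rewrite /Defs.pcomp -mulgA sr_invol mulg1. Qed.

(* The only inversion s_i w can have beyond those of w is at the pair of
   positions (w^-1(i-1), w^-1(i)). *)
Lemma plen_lmul_sr n i (w : 'S_n) : (1 <= i < n)%N ->
  (plen (Defs.pcomp (sr n i) w) <= (plen w).+1)%N.
Proof.
move=> hi; have pa : (i.-1 < n)%N by lia.
have pb : (i < n)%N by lia.
pose e := ((w^-1)%g (Ordinal pa), (w^-1)%g (Ordinal pb)).
rewrite /plen; set A := [set p | _]; set B := [set p | _].
suff sub : A \subset e |: B.
  by apply: leq_trans (subset_leq_card sub) _; rewrite cardsU1; case: (e \notin B).
apply/subsetP => p; rewrite !inE /Defs.pcomp !permM !sr_val // => /andP [p12].
case inv : (val (w p.2) < val (w p.1))%N; first by rewrite p12 orbT.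
move=> inv'; have wp12 : val (w p.1) != val (w p.2).
  by apply/eqP => /val_inj /perm_inj p1_eq; rewrite p1_eq ltnn in p12.
have [e1 e2] := swap_pos_inversion (i := i) ltac:(lia) wp12 inv' (negbT inv).
have wp1 : Ordinal pa = w p.1 by apply/val_inj; rewrite /= e1.
have wp2 : Ordinal pb = w p.2 by apply/val_inj; rewrite /= e2.
by rewrite /e wp1 wp2 !permK -surjective_pairing eqxx.
Qed.

Lemma plen_le_lmul_sr n i (w : 'S_n) : (1 <= i < n)%N ->
  (plen w <= (plen (Defs.pcomp (sr n i) w)).+1)%N.
Proof. by move=> hi; rewrite -{1}(pcomp_srK i w); exact: plen_lmul_sr. Qed.

Lemma plen1 n : plen (1%g : 'S_n) = 0%N.
Proof.
apply/eqP; rewrite cards_eq0; apply/eqP/setP => p.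
by rewrite !inE !perm1; lia.
Qed.

Lemma plen_sprod n l : valid_word n l -> (plen (sprod n l) <= size l)%N.
Proof.
elim: l => [|i l IH] /=; first by rewrite plen1.
by move=> /andP [hi /IH len_le]; have := plen_lmul_sr (sprod n l) hi; lia.
Qed.

Lemma plen_lmul_word n l (w : 'S_n) : valid_word n l ->
  (plen w <= plen (lmul_word l w) + size l)%N.
Proof.
elim: l w => [|i l IH] w /=; first by rewrite addn0.
move=> /andP [hi hl]; have := plen_le_lmul_sr w hi.
by have := IH (Defs.pcomp (sr n i) w) hl; lia.
Qed.

Lemma card_lt_pairs n : #|[set p : 'I_n * 'I_n | (p.1 < p.2)%N]| = 'C(n, 2).
Proof.
rewrite -sum1dep_card.
rewrite -(pair_big_dep xpredT (fun i j : 'I_n => (i < j)%N) (fun _ _ => 1%N)) /=.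
rewrite (exchange_big_dep xpredT) //= -bin2_sum big_mkord; apply: eq_bigr => j _.
by rewrite (big_ord_narrow (ltnW (ltn_ord j))) /= sum1_card card_ord.
Qed.

Lemma plen_w0 n : plen (w0 n) = 'C(n, 2).
Proof.
rewrite -card_lt_pairs /plen; apply: eq_card => p; rewrite !inE.
have := ltn_ord p.1; have := ltn_ord p.2.
by rewrite /w0 !permE /=; case: ltnP; lia.
Qed.

Fixpoint descending n (l : seq nat) (w : 'S_n) : Prop :=
  if l is i :: l' then
    (plen (Defs.pcomp (sr n i) w) < plen w)%N /\ descending l' (Defs.pcomp (sr n i) w)
  else True.

Lemma descendingP n l (w : 'S_n) : valid_word n l ->
  (plen (lmul_word l w) + size l <= plen w)%N -> descending l w.
Proof.
elim: l w => [|i l IH] w //= /andP [hi hl] len_le.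
have := plen_lmul_word (Defs.pcomp (sr n i) w) hl.
have := plen_le_lmul_sr w hi.
by split; [lia | apply: IH => //; lia].
Qed.

Lemma descending_cat n l1 l2 (w : 'S_n) :
  descending (l1 ++ l2) w -> descending l1 w /\ descending l2 (lmul_word l1 w).
Proof.
elim: l1 w => [|i l IH] w //= [desc_i /IH [desc_l desc_l2]].
by split; first split.
Qed.

Lemma descending_from_w0 n l l' : valid_word n l -> valid_word n l' ->
  lmul_word l (w0 n) = sprod n l' -> (size l + size l' <= 'C(n, 2))%N ->
  descending l (w0 n).
Proof.
move=> vl vl' ll' size_le; apply: descendingP vl _.
by rewrite ll' plen_w0; have := plen_sprod vl'; lia.
Qed.

Lemma bin2_sub2 n : (2 <= n)%N -> 'C(n, 2) = ('C(n - 2, 2) + (n - 2) + n.-1)%N.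
Proof. by case: n => [|[|m]] // _; rewrite !subSS subn0 !binS !bin1 ?bin0; lia. Qed.

Section LongestElementChains.
Variable n : nat.
Hypothesis n_ge3 : (3 <= n)%N.

Lemma descending_to_sprod_rev_iota : descending (iota 1 n.-1 ++ w0_word 0 (n - 2)) (w0 n).
Proof.
apply: (descending_from_w0 _ _ (lmul_w0_sprod_rev_iota n_ge3)).
- by rewrite valid_cat valid_iota ?valid_w0_word //; lia.
- by rewrite valid_rev valid_iota //; lia.
by rewrite size_cat size_rev !size_iota size_w0_word (bin2_sub2 (ltnW n_ge3)); lia.
Qed.

Lemma descending_to_tr : descending (w0_word 1 (n - 2)) (w0 n).
Proof.
apply: (descending_from_w0 _ _ (etrans (lmul_w0_tr n_ge3) (tr_sprod n_ge3))).
- by rewrite valid_w0_word //; lia.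
- by rewrite valid_cat valid_rev !valid_iota //; lia.
by rewrite size_cat size_rev !size_iota size_w0_word (bin2_sub2 (ltnW n_ge3)); lia.
Qed.

Lemma descending_to_sprod_iota : descending (w0_word 1 n.-1) (w0 n).
Proof.
apply: (descending_from_w0 _ _ (lmul_w0_sprod_iota n_ge3)).
- by rewrite valid_w0_word //; lia.
- by rewrite valid_iota //; lia.
rewrite size_iota size_w0_word (bin2_sub2 (ltnW n_ge3)).
by case: n n_ge3 => [|[|[|m]]] // _; rewrite !binS !bin1 ?bin0 /=; lia.
Qed.

End LongestElementChains.

Local Open Scope ring_scope.

Lemma comp_mpolyA (R : comRingType) m k l (p : {mpoly R[m]})
    (t : m.-tuple {mpoly R[k]}) (u : k.-tuple {mpoly R[l]}) :
  (p \mPo t) \mPo u = p \mPo [tuple tnth t i \mPo u | i < m].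
Proof.
rewrite (comp_mpolyEX p t) (comp_mpolyEX p) raddf_sum; apply: eq_bigr => mo _.
rewrite /= comp_mpolyZ !comp_mpolyX rmorph_prod; congr (_ *: _).
by apply: eq_bigr => i _; rewrite rmorphXn tnth_mktuple.
Qed.

Lemma mpolyX_sub_neq0 (R : nzRingType) k (a b : 'I_k) :
  a != b -> 'X_a - 'X_b != 0 :> {mpoly R[k]}.
Proof.
move=> ab; apply/eqP => /(congr1 (mcoeff U_(a))).
by rewrite mcoeffB !mcoeffXU eqxx eq_sym (negbTE ab) mcoeff0 subr0 => /eqP; rewrite oner_eq0.
Qed.

Lemma one_sub_mpolyX_neq0 (R : nzRingType) k (a : 'I_k) : 1 - 'X_a != 0 :> {mpoly R[k]}.
Proof.
apply/eqP => /(congr1 (mcoeff U_(a))).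
rewrite mcoeffB mcoeffXU eqxx mcoeff1 mnm1_eq0 mcoeff0 sub0r => /eqP.
by rewrite oppr_eq0 oner_eq0.
Qed.

HB.instance Definition _ n (f : 'I_n -> 'I_n) :=
  GRing.RMorphism.copy (@etasub n f)
    (comp_mpoly [tuple (match split k with
                        | inl i => 'X_(lshift n i)
                        | inr j => 'X_(rshift n (f j)) end : Ring n) | k < n + n]).
HB.instance Definition _ n i := GRing.RMorphism.copy (@s_eta n i) (etasub (sr n i)).
HB.instance Definition _ n := GRing.RMorphism.copy (@omega_eta n) (etasub (@ordS n)).

Section EtaSubstitution.
Variable n : nat.
Local Notation RR := (Ring n).
Implicit Types (f g h : 'I_n -> 'I_n) (p : RR).

Lemma etasub_var f k : etasub f 'X_k =
  match split k with inl i => 'X_(lshift n i) | inr j => 'X_(rshift n (f j)) end.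
Proof. by rewrite /etasub comp_mpolyXU -tnth_nth tnth_mktuple. Qed.

Lemma split_lshift (a : 'I_n) : split (lshift n a) = inl a.
Proof. exact: (unsplitK (inl a)). Qed.

Lemma split_rshift (a : 'I_n) : split (rshift n a) = inr a.
Proof. exact: (unsplitK (inr a)). Qed.

Lemma etasub_comp f g h p : f \o g =1 h -> etasub f (etasub g p) = etasub h p.
Proof.
move=> fgh; rewrite /etasub comp_mpolyA; apply: (congr1 (fun t => p \mPo t)).
apply: eq_mktuple => k.
rewrite tnth_mktuple; case: (split k) => j; rewrite comp_mpolyXU -tnth_nth tnth_mktuple.
  by rewrite split_lshift.
by rewrite split_rshift -fgh.
Qed.

Lemma eq_etasub f g p : f =1 g -> etasub f p = etasub g p.
Proof.
move=> fg; rewrite /etasub; apply: (congr1 (fun t => p \mPo t)); apply: eq_mktuple => k.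
by case: (split k) => j; rewrite ?fg.
Qed.

Lemma eta_var (a : 'I_n) : Defs.eta n a.+1 = 'X_(rshift n a).
Proof. by rewrite /Defs.eta /= valK. Qed.

Lemma etasub_eta f (a : 'I_n) : etasub f (Defs.eta n a.+1) = Defs.eta n (f a).+1.
Proof. by rewrite !eta_var etasub_var split_rshift. Qed.

Lemma s_eta_eta i k : (1 <= i < n)%N -> (1 <= k <= n)%N ->
  s_eta i (Defs.eta n k) = Defs.eta n (swap_pos i k.-1).+1.
Proof.
move=> hi hk; have k_lt : (k.-1 < n)%N by lia.
have -> : k = (Ordinal k_lt).+1 by rewrite /=; lia.
by rewrite /s_eta etasub_eta sr_val.
Qed.

Lemma omega_eta_eta k : (1 <= k < n)%N -> omega_eta (Defs.eta n k) = Defs.eta n k.+1.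
Proof.
move=> hk; have k_lt : (k.-1 < n)%N by lia.
have -> : k = (Ordinal k_lt).+1 by rewrite /=; lia.
by rewrite /omega_eta etasub_eta /= modn_small //; lia.
Qed.

Lemma omega_s_eta i p : (1 <= i)%N -> (i.+1 < n)%N ->
  omega_eta (s_eta i p) = s_eta i.+1 (omega_eta p).
Proof.
move=> i_ge1 i_lt; rewrite /omega_eta /s_eta !(etasub_comp _ (frefl _)).
apply: eq_etasub => a; apply/val_inj; rewrite /= !sr_val //=; last by lia.
have := ltn_ord a; case: (ltnP a.+1 n) => a_lt a_lt'.
  by rewrite (modn_small a_lt) modn_small /swap_pos; lia_ifs.
have -> : (swap_pos i a).+1 = n by rewrite /swap_pos; lia_ifs.
have -> : a.+1 = n by lia.
by rewrite modnn /swap_pos; lia_ifs.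
Qed.

End EtaSubstitution.

Definition eta_fixed n : pred (Ring n) :=
  fun c => [forall f : {ffun 'I_n -> 'I_n}, etasub f c == c].
Definition eta_free n : qualifier 0 (Ring n) := [qualify c : Ring n | eta_fixed c].
Arguments eta_free {n}.

Lemma eta_freeP n (c : Ring n) : reflect (forall f, etasub f c = c) (c \is eta_free).
Proof.
apply: (iffP forallP) => [fixed f | fixed f]; last exact/eqP/fixed.
by rewrite -(eq_etasub _ (ffunE f)); apply/eqP/fixed.
Qed.

Fact eta_fixed_subring n : subring_closed (@eta_fixed n).
Proof.
split=> [|a b /forallP a_fix /forallP b_fix|a b /forallP a_fix /forallP b_fix];
  apply/forallP => f; first by rewrite rmorph1.
  by rewrite rmorphB /= (eqP (a_fix f)) (eqP (b_fix f)).
by rewrite rmorphM /= (eqP (a_fix f)) (eqP (b_fix f)).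
Qed.

HB.instance Definition _ n := GRing.isSubringClosed.Build (Ring n) (@eta_fixed n)
  (eta_fixed_subring n).

Lemma eta_free_zv n k : zv n k \is eta_free.
Proof.
apply/eta_freeP => f; rewrite /zv; case: insub => [a|]; last exact: rmorph0.
by rewrite etasub_var split_lshift.
Qed.

Lemma eta_free_Qv n k : Qv n k \is eta_free.
Proof.
apply/eta_freeP => f; rewrite /Qv; case: insub => [a|]; last exact: rmorph0.
exact: comp_mpolyC.
Qed.

Lemma eta_free_Fpol n i m : Fpol n i m \is eta_free.
Proof.
apply: rpred_sum => J _; apply: rpredM; apply: rpred_prod => a _.
  by rewrite rpredB ?rpred1 ?eta_free_Qv.
exact: eta_free_zv.
Qed.

Lemma Fpol0 n i : Fpol n i 0 = 1.
Proof.
rewrite /Fpol (big_pred1 set0); last by move=> J; rewrite /= cards_eq0.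
by rewrite !big1 ?mulr1 // => a; rewrite inE.
Qed.

Lemma mul_denom_eq (K : fieldType) (f s d y : K) : d != 0 -> y != 0 ->
  (f + (s - f) / (d / y) - f) * d = (s - f) * y.
Proof. by move=> d_neq0 y_neq0; field; rewrite d_neq0 y_neq0. Qed.

Definition yv n k : Ring n := 1 - Defs.eta n k.

Section DividedDifferences.
Variable n : nat.
Local Notation RR := (Ring n).
Local Notation yv := (yv n).
Implicit Types (f g c : RR).

Lemma s_eta_yv i k : (1 <= i < n)%N -> (1 <= k <= n)%N ->
  s_eta i (yv k) = yv (swap_pos i k.-1).+1.
Proof. by move=> hi hk; rewrite rmorphB rmorph1 /= s_eta_eta. Qed.

Lemma s_eta_yv_self i : (1 <= i < n)%N -> s_eta i (yv i) = yv i.+1.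
Proof.
move=> hi; rewrite s_eta_yv; try lia.
by have -> : (swap_pos i i.-1).+1 = i.+1 by rewrite /swap_pos; lia_ifs.
Qed.

Lemma s_eta_yvS i : (1 <= i < n)%N -> s_eta i (yv i.+1) = yv i.
Proof.
move=> hi; rewrite s_eta_yv /=; try lia.
by have -> : (swap_pos i i).+1 = i by rewrite /swap_pos; lia_ifs.
Qed.

Lemma s_eta_yv_other i k : (1 <= i < n)%N -> (1 <= k <= n)%N -> k != i -> k != i.+1 ->
  s_eta i (yv k) = yv k.
Proof.
move=> hi hk /eqP ki /eqP kiS; rewrite s_eta_yv //.
by have -> : (swap_pos i k.-1).+1 = k by rewrite /swap_pos; lia_ifs.
Qed.

Lemma omega_yv k : (1 <= k < n)%N -> omega_eta (yv k) = yv k.+1.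
Proof. by move=> hk; rewrite /yv rmorphB rmorph1 /= omega_eta_eta. Qed.

Lemma s_eta_eta_free i c : c \is eta_free -> s_eta i c = c.
Proof. by move=> /eta_freeP; apply. Qed.

Lemma omega_eta_free c : c \is eta_free -> omega_eta c = c.
Proof. by move=> /eta_freeP; apply. Qed.

Lemma yv_neq0 k : (1 <= k <= n)%N -> yv k != 0.
Proof.
move=> hk; have k_lt : (k.-1 < n)%N by lia.
have -> : k = (Ordinal k_lt).+1 by rewrite /=; lia.
by rewrite /yv eta_var one_sub_mpolyX_neq0.
Qed.

Lemma yv_sub_neq0 i : (1 <= i < n)%N -> yv i - yv i.+1 != 0.
Proof.
move=> hi; have i_lt : (i.-1 < n)%N by lia.
have iS_lt : (i < n)%N by lia.
rewrite /yv opprB addrC addrA subrK.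
have -> : i = (Ordinal i_lt).+1 by rewrite /=; lia.
rewrite (_ : (Ordinal i_lt).+2 = (Ordinal iS_lt).+1); last by rewrite /=; lia.
by rewrite !eta_var mpolyX_sub_neq0 // -(inj_eq val_inj) /=; lia.
Qed.

(* [g = D^Q_i f] with the denominators cleared. *)
Definition DQ_rel i f g : Prop := (g - f) * (yv i - yv i.+1) = (s_eta i f - f) * yv i.

Lemma DQ_relP i f g : (1 <= i < n)%N -> DQ i f = g%:F -> DQ_rel i f g.
Proof.
move=> hi; rewrite /DQ /DQ_rel => DQ_f.
have eta_diff : Defs.eta n i.+1 - Defs.eta n i = yv i - yv i.+1 by rewrite /yv; ring.
rewrite eta_diff -/(yv i) in DQ_f.
have d_neq0 : (yv i - yv i.+1)%:F != 0 :> {fraction RR} by rewrite tofrac_eq0 yv_sub_neq0.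
have y_neq0 : (yv i)%:F != 0 :> {fraction RR} by rewrite tofrac_eq0 yv_neq0 //; lia.
have := mul_denom_eq (f%:F) (s_eta i f)%:F d_neq0 y_neq0.
by rewrite DQ_f -!tofracB -!tofracM => /eqP; rewrite tofrac_eq => /eqP.
Qed.

Lemma DQ_rel_uniq i f g1 g2 : (1 <= i < n)%N -> DQ_rel i f g1 -> DQ_rel i f g2 -> g1 = g2.
Proof.
move=> hi rel1 rel2; apply: (addIr (- f)); apply: (mulIf (yv_sub_neq0 hi)) => /=.
by rewrite rel1 rel2.
Qed.

Lemma DQ_rel0 i : DQ_rel i 0 0.
Proof. by rewrite /DQ_rel rmorph0 !subrr !mul0r. Qed.

Lemma DQ_relD i f1 g1 f2 g2 :
  DQ_rel i f1 g1 -> DQ_rel i f2 g2 -> DQ_rel i (f1 + f2) (g1 + g2).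
Proof.
rewrite /DQ_rel rmorphD /= => rel1 rel2.
have split_diff (a1 a2 b1 b2 : RR) : a1 + a2 - (b1 + b2) = (a1 - b1) + (a2 - b2).
  by rewrite opprD addrACA.
rewrite [g1 + g2 - _]split_diff [_ + _ - (f1 + f2)]split_diff.
by rewrite [in LHS]mulrDl [in RHS]mulrDl rel1 rel2.
Qed.

Lemma DQ_relMl i c f g : s_eta i c = c -> DQ_rel i f g -> DQ_rel i (c * f) (c * g).
Proof. by rewrite /DQ_rel rmorphM /= => -> rel; rewrite -!mulrBr -!mulrA rel. Qed.

Lemma DQ_rel_omega i f g : (1 <= i)%N -> (i.+1 < n)%N ->
  DQ_rel i f g -> DQ_rel i.+1 (omega_eta f) (omega_eta g).
Proof.
move=> i_ge1 i_lt rel; have := congr1 (@omega_eta n) rel.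
by rewrite /yv !rmorphM !rmorphB !rmorph1 /= !omega_eta_eta ?omega_s_eta //; lia.
Qed.

Fixpoint DQ_word (l : seq nat) f g : Prop :=
  if l is i :: l' then exists h, DQ_rel i f h /\ DQ_word l' h g else f = g.

Lemma DQ_word_uniq l f g1 g2 : valid_word n l -> DQ_word l f g1 -> DQ_word l f g2 -> g1 = g2.
Proof.
elim: l f => [|i l IH] f /=; first by move=> _ <- <-.
move=> /andP [hi hl] [h1 [rel1 word1]] [h2 [rel2 word2]].
by move: word1; rewrite (DQ_rel_uniq hi rel1 rel2) => /IH; apply.
Qed.

Lemma DQ_word_cat l1 l2 f g h : DQ_word l1 f g -> DQ_word l2 g h -> DQ_word (l1 ++ l2) f h.
Proof.
elim: l1 f => [|i l IH] f /=; first by move=> ->.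
by move=> [k [rel word]] word2; exists k; split => //; exact: IH word word2.
Qed.

Lemma DQ_word0 l : DQ_word l 0 0.
Proof. by elim: l => [|i l IH] //=; exists 0; split => //; exact: DQ_rel0. Qed.

Lemma DQ_wordD l f1 g1 f2 g2 :
  DQ_word l f1 g1 -> DQ_word l f2 g2 -> DQ_word l (f1 + f2) (g1 + g2).
Proof.
elim: l f1 f2 => [|i l IH] f1 f2 /=; first by move=> -> ->.
move=> [h1 [rel1 word1]] [h2 [rel2 word2]].
by exists (h1 + h2); split; [exact: DQ_relD | exact: IH].
Qed.

Lemma DQ_word_sum l I (r : seq I) (F G : I -> RR) :
  (forall i, DQ_word l (F i) (G i)) -> DQ_word l (\sum_(i <- r) F i) (\sum_(i <- r) G i).
Proof.
move=> word; elim: r => [|a r IH]; first by rewrite !big_nil; exact: DQ_word0.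
by rewrite !big_cons; exact: DQ_wordD.
Qed.

Lemma DQ_wordMl l c f g : (forall i, i \in l -> s_eta i c = c) ->
  DQ_word l f g -> DQ_word l (c * f) (c * g).
Proof.
elim: l f => [|i l IH] f /= c_fixed; first by move=> ->.
move=> [h [rel word]]; exists (c * h); split.
  by apply: DQ_relMl rel; apply: c_fixed; rewrite mem_head.
by apply: IH word => j j_in; apply: c_fixed; rewrite inE j_in orbT.
Qed.

Lemma DQ_word_omega l f g : (forall i, i \in l -> (1 <= i)%N && (i.+1 < n)%N) ->
  DQ_word l f g -> DQ_word (map S l) (omega_eta f) (omega_eta g).
Proof.
elim: l f => [|i l IH] f /= l_range; first by move=> ->.
move=> [h [rel word]]; exists (omega_eta h); split.
  by have /andP [? ?] := l_range i (mem_head _ _); exact: DQ_rel_omega.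
by apply: IH word => j j_in; apply: l_range; rewrite inE j_in orbT.
Qed.

Lemma DQ_word_descending (G : 'S_n -> RR) l w :
  (forall i w, (1 <= i < n)%N -> (plen (Defs.pcomp (sr n i) w) < plen w)%N ->
     DQ i (G w) = (G (Defs.pcomp (sr n i) w))%:F) ->
  valid_word n l -> descending l w -> DQ_word l (G w) (G (lmul_word l w)).
Proof.
move=> DQ_G; elim: l w => [|i l IH] w //= /andP [hi hl] [desc_i desc_l].
by exists (G (Defs.pcomp (sr n i) w)); split; [exact/DQ_relP/DQ_G | exact: IH].
Qed.

End DividedDifferences.

Lemma geom_sum_mul_sub (R : comRingType) (x w : R) e b N :
  (\sum_(k < N) x ^+ (e + N.-1 - k) * w ^+ (b + k)) * (x - w) =
  x ^+ (e + N) * w ^+ b - x ^+ e * w ^+ (b + N).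
Proof.
have -> : \sum_(k < N) x ^+ (e + N.-1 - k) * w ^+ (b + k) =
          x ^+ e * w ^+ b * \sum_(k < N) x ^+ (N.-1 - k) * w ^+ k.
  rewrite mulr_sumr; apply: eq_bigr => k _.
  by rewrite -addnBA ?exprD; [ring | have := ltn_ord k; lia].
by rewrite -mulrA [_ * (x - w)]mulrC -subrXX !exprD; ring.
Qed.

Definition dd_mono (R : comRingType) (x w : R) (p a : nat) : R :=
  if (p <= a)%N then \sum_(k < (a - p).+1) x ^+ (a - k) * w ^+ (p + k)
  else \sum_(k < (p - a).-1) - x ^+ (p.-1 - k) * w ^+ (a.+1 + k).

Lemma dd_monoE (R : comRingType) (x w : R) p a :
  dd_mono x w p a * (x - w) = x ^+ a.+1 * w ^+ p - x ^+ p * w ^+ a.+1.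
Proof.
rewrite /dd_mono; case: leqP => pa.
  rewrite (eq_bigr (fun k : 'I_(a - p).+1 => x ^+ (p + (a - p).+1.-1 - k) * w ^+ (p + k)));
    last by move=> k _; congr (x ^+ _ * _); lia.
  by rewrite geom_sum_mul_sub; have -> : (p + (a - p).+1 = a.+1)%N by lia.
rewrite (eq_bigr (fun k : 'I_(p - a).-1 =>
  - (x ^+ (a.+1 + (p - a).-1.-1 - k) * w ^+ (a.+1 + k)))); last first.
  by move=> k _; rewrite mulNr; congr (- (x ^+ _ * _)); have := ltn_ord k; lia.
rewrite sumrN mulNr geom_sum_mul_sub opprB.
by have -> : (a.+1 + (p - a).-1 = p)%N by lia.
Qed.

Lemma dd_mono_rel (R : comRingType) (x w : R) p a :
  (dd_mono x w p a - x ^+ p * w ^+ a) * (x - w) = (w ^+ p * x ^+ a - x ^+ p * w ^+ a) * x.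
Proof. by rewrite mulrBl dd_monoE !exprS; ring. Qed.

Section Staircases.
Variable n : nat.
Local Notation RR := (Ring n).
Local Notation yv := (yv n).
Implicit Types (f g c : RR).

Lemma DQ_rel_mono i p a : (1 <= i < n)%N ->
  DQ_rel i (yv i ^+ p * yv i.+1 ^+ a) (dd_mono (yv i) (yv i.+1) p a).
Proof.
move=> hi; rewrite /DQ_rel rmorphM !rmorphXn /= s_eta_yv_self // s_eta_yvS //.
exact: dd_mono_rel.
Qed.

Lemma DQ_word_dd_mono l (x w g g' : RR) p a B :
  (forall i, i \in l -> s_eta i x = x) ->
  (forall q, (q <= B)%N -> DQ_word l (w ^+ q * g) (if q == 0%N then g' else 0)) ->
  (p <= B.+1)%N -> (a <= B)%N ->
  DQ_word l (g * dd_mono x w p a) (if p == 0%N then x ^+ a * g' else 0).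
Proof.
move=> x_fixed word pB aB; rewrite /dd_mono; case: leqP => pa; rewrite mulr_sumr.
  have -> : (if p == 0%N then x ^+ a * g' else 0) =
            \sum_(k < (a - p).+1) x ^+ (a - k) * (if (p + k == 0)%N then g' else 0).
    rewrite big_ord_recl big1 => [|k _]; last by rewrite lift0 addnS /= mulr0.
    by rewrite /= subn0 addn0 addr0; case: (p == 0%N); rewrite ?mulr0.
  apply: DQ_word_sum => k; rewrite mulrCA [g * _]mulrC; apply: DQ_wordMl.
    by move=> i /x_fixed; rewrite rmorphXn /= => ->.
  by apply: word; have := ltn_ord k; lia.
have -> : (if p == 0%N then x ^+ a * g' else 0) =
          \sum_(k < (p - a).-1) - x ^+ (p.-1 - k) * (if (a.+1 + k == 0)%N then g' else 0).
  by rewrite big1 => [|k _]; [case: eqP => //; lia | rewrite mulr0].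
apply: DQ_word_sum => k; rewrite mulrCA [g * _]mulrC; apply: DQ_wordMl.
  by move=> i /x_fixed; rewrite rmorphN rmorphXn /= => ->.
by apply: word; have := ltn_ord k; lia.
Qed.

(* [staircase s K f f'] : [f] is a polynomial in [y_(s+2), ..., y_(s+K+1)]
   with eta-free coefficients and degree at most [K+2-j] in [y_(s+j+1)],
   and [f'] is [f] with each [y_k] replaced by [y_(k-1)]. *)
Inductive staircase : nat -> nat -> RR -> RR -> Prop :=
| staircase_const s c : c \is eta_free -> staircase s 0 c c
| staircase0 s K : staircase s K 0 0
| staircase_pow s K a g g' : (a <= K.+1)%N -> staircase s.+1 K g g' ->
    staircase s K.+1 (yv s.+2 ^+ a * g) (yv s.+1 ^+ a * g')
| staircaseD s K f1 g1 f2 g2 :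
    staircase s K f1 g1 -> staircase s K f2 g2 -> staircase s K (f1 + f2) (g1 + g2)
| staircaseMl s K c f g : c \is eta_free -> staircase s K f g -> staircase s K (c * f) (c * g).

Lemma staircase_s_eta s K f f' j : staircase s K f f' -> (s + K < n)%N ->
  (1 <= j <= s)%N -> s_eta j f = f.
Proof.
elim => {s K f f'} [s c /eta_freeP c_fixed _ _ | s K _ _ | s K a g g' _ _ IH sK j_le |
  s K f1 g1 f2 g2 _ IH1 _ IH2 sK j_le | s K c f g c_free _ IH sK j_le].
- exact: c_fixed.
- exact: rmorph0.
- by rewrite rmorphM rmorphXn /= s_eta_yv_other ?IH //; lia.
- by rewrite rmorphD /= IH1 ?IH2.
- by rewrite rmorphM /= s_eta_eta_free ?IH.
Qed.

Lemma DQ_word_staircase s K f f' : staircase s K f f' -> (s + K.+2 <= n)%N ->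
  forall p, (p <= K.+1)%N ->
  DQ_word (iota s.+1 K.+1) (yv s.+1 ^+ p * f) (if p == 0%N then f' else 0).
Proof.
elim => {s K f f'}.
- move=> s c c_free sn p p_le /=; exists (c * dd_mono (yv s.+1) (yv s.+2) p 0); split.
    rewrite -(mulr1 (_ ^+ p)) -(expr0 (yv s.+2)) mulrC.
    by apply: DQ_relMl (DQ_rel_mono _ _ _); [exact: s_eta_eta_free | lia].
  case: p p_le => [|[|//]] _ /=; rewrite /dd_mono /=; last by rewrite big_ord0 mulr0.
  by rewrite subnn big_ord1 /= expr0 !mulr1.
- by move=> s K sn p _; rewrite mulr0; case: (p == 0%N); exact: DQ_word0.
- move=> s K a g g' aK g_stair IH sn p p_le.
  have g_fixed : s_eta s.+1 g = g by apply: (staircase_s_eta g_stair); lia.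
  have hs : (1 <= s.+1 < n)%N by lia.
  exists (g * dd_mono (yv s.+1) (yv s.+2) p a); split; last first.
    apply: DQ_word_dd_mono p_le aK; last by apply: IH; lia.
    by move=> i; rewrite mem_iota => i_range; rewrite s_eta_yv_other //; lia.
  by rewrite mulrA mulrC; apply: DQ_relMl g_fixed (DQ_rel_mono _ _ hs).
- move=> s K f1 g1 f2 g2 _ IH1 _ IH2 sn p p_le.
  by rewrite mulrDr; case: (p == 0%N) (IH1 sn p p_le) (IH2 sn p p_le) => w1 w2;
    [exact: DQ_wordD w1 w2 | rewrite -[0]addr0; exact: DQ_wordD w1 w2].
- move=> s K c f g c_free _ IH sn p p_le.
  rewrite mulrCA (_ : (if p == 0%N then c * g else 0) = c * if p == 0%N then g else 0).
    by apply: DQ_wordMl (IH sn p p_le) => i _; exact: s_eta_eta_free.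
  by case: (p == 0%N); rewrite ?mulr0.
Qed.

Lemma staircase_sum s K I (r : seq I) (F G : I -> RR) :
  (forall i, staircase s K (F i) (G i)) ->
  staircase s K (\sum_(i <- r) F i) (\sum_(i <- r) G i).
Proof.
move=> stair; elim: r => [|a r IH]; first by rewrite !big_nil; exact: staircase0.
by rewrite !big_cons; exact: staircaseD.
Qed.

End Staircases.

Section PsiProducts.
Variable n : nat.
Local Notation RR := (Ring n).
Local Notation yv := (yv n).

Definition psi_poly m (t : RR) : RR := \sum_(j < m.+1) (-1) ^+ j * t ^+ j * Fpol n m j.

Definition psi_prod s K : RR := \prod_(1 <= k < K.+1) psi_poly (K.+1 - k) (yv (s + k)).

Lemma psi_polyMr m t P :
  psi_poly m t * P = \sum_(j < m.+1) ((-1) ^+ j * Fpol n m j) * (t ^+ j * P).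
Proof. by rewrite mulr_suml; apply: eq_bigr => j _; ring. Qed.

Lemma psi_prod0 s : psi_prod s 0 = 1.
Proof. by rewrite /psi_prod big_geq. Qed.

Lemma psi_prodS s K : psi_prod s K.+1 = psi_poly K.+1 (yv s.+1) * psi_prod s.+1 K.
Proof.
rewrite /psi_prod (big_nat_recl K.+1 1); last by [].
rewrite subn1 addn1; apply: f_equal2; first by [].
by apply: eq_bigr => k _; rewrite subSS addSnnS.
Qed.

Lemma psi_prod_pred s K : (0 < K)%N ->
  psi_prod s K = psi_poly K (yv s.+1) * psi_prod s.+1 K.-1.
Proof. by case: K => // K _; rewrite psi_prodS. Qed.

Lemma eta_free_psi_coef m j : (-1) ^+ j * Fpol n m j \is eta_free.
Proof. by rewrite rpredM ?rpredX ?rpredN1 ?eta_free_Fpol. Qed.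

Lemma staircase_psi_prod s K : staircase s K (psi_prod s.+1 K) (psi_prod s K).
Proof.
elim: K s => [|K IH] s; first by rewrite !psi_prod0; apply: staircase_const; exact: rpred1.
rewrite !psi_prodS [X in staircase _ _ X _]psi_polyMr [X in staircase _ _ _ X]psi_polyMr.
apply: staircase_sum => j; apply: staircaseMl (eta_free_psi_coef _ _) _.
by apply: staircase_pow (IH _); have := ltn_ord j; lia.
Qed.

Lemma DQ_word_psi_prodS s K : (s + K.+2 <= n)%N ->
  DQ_word (iota s.+1 K.+1) (psi_prod s K.+1) (psi_prod s K).
Proof.
move=> sK; rewrite psi_prodS psi_polyMr.
have -> : psi_prod s K = \sum_(j < K.+2)
    ((-1) ^+ j * Fpol n K.+1 j) * (if j == 0%N :> nat then psi_prod s K else 0).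
  rewrite big_ord_recl big1 => [|j _]; last by rewrite lift0 /= mulr0.
  by rewrite /= expr0 Fpol0 !mul1r addr0.
apply: DQ_word_sum => j; apply: DQ_wordMl => [i _|].
  exact/s_eta_eta_free/eta_free_psi_coef.
by apply: DQ_word_staircase (staircase_psi_prod s K) _ _ _; [lia | have := ltn_ord j; lia].
Qed.

Lemma DQ_word_psi_prod s M : (s + M <= n)%N -> DQ_word (w0_word s M) (psi_prod s M.-1) 1.
Proof.
elim: M => [|[|M] IH] sM /=; rewrite ?psi_prod0 //.
apply: DQ_word_cat (DQ_word_psi_prodS _) (IH _); lia.
Qed.

Lemma omega_psi_poly m t : omega_eta (psi_poly m t) = psi_poly m (omega_eta t).
Proof.
rewrite rmorph_sum; apply: eq_bigr => j _ /=.
by rewrite !rmorphM !rmorphXn rmorphN1 /= (omega_eta_free (eta_free_Fpol n m j)).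
Qed.

Lemma s_eta_psi_poly i m t : s_eta i (psi_poly m t) = psi_poly m (s_eta i t).
Proof.
rewrite rmorph_sum; apply: eq_bigr => j _ /=.
by rewrite !rmorphM !rmorphXn rmorphN1 /= (s_eta_eta_free _ (eta_free_Fpol n m j)).
Qed.

Lemma omega_psi_prod K : (K < n)%N -> omega_eta (psi_prod 0 K) = psi_prod 1 K.
Proof.
move=> K_lt; rewrite rmorph_prod; apply: eq_big_nat => k k_range /=.
by rewrite omega_psi_poly omega_yv; [rewrite add0n add1n | lia].
Qed.

Lemma Gtop_psi_prod : (0 < n)%N -> Gtop n = psi_prod 0 n.-1.
Proof.
move=> n_gt0; rewrite /Gtop /psi_prod prednK // big_nat_rev /=.
apply: eq_big_nat => i i_range; rewrite add0n.
have -> : (1 + n - i.+1 = n - i)%N by lia.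
transitivity (psi_poly (n - i) (yv (n - (n - i)))); first by [].
by have -> : (n - (n - i) = i)%N by lia.
Qed.

End PsiProducts.

Section Proposition.
Variable n : nat.
Hypothesis n_ge3 : (3 <= n)%N.
Variable G : 'S_n -> Ring n.
Hypothesis G_QGroth : is_QGroth G.

Local Notation psi1 := (psi_poly n.-1 (yv n 1)).

Lemma G_descending l w : valid_word n l -> descending l w ->
  DQ_word l (G w) (G (lmul_word l w)).
Proof.
apply: DQ_word_descending => i v hi desc.
by have := G_QGroth.2 i ltac:(lia) ltac:(lia) v; rewrite desc.
Qed.

Lemma G_w0 : G (w0 n) = psi1 * omega_eta (psi_prod n 0 (n - 2)).
Proof.
rewrite G_QGroth.1 Gtop_psi_prod; last by lia.
rewrite psi_prod_pred; last by lia.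
by rewrite omega_psi_prod ?subn2 //; lia.
Qed.

Lemma s_eta_psi1 i : (2 <= i < n)%N -> s_eta i psi1 = psi1.
Proof. by move=> hi; rewrite s_eta_psi_poly s_eta_yv_other //; lia. Qed.

Lemma DQ_word_G_sprod_rev_iota :
  DQ_word (w0_word 0 (n - 2)) (psi_prod n 0 (n - 2)) (G (sprod n (rev (iota 1 (n - 2))))).
Proof.
have [desc_iota desc_w0] := descending_cat (descending_to_sprod_rev_iota n_ge3).
have valid_iota1 : valid_word n (iota 1 n.-1) by apply: valid_iota; lia.
have valid_w0 : valid_word n (w0_word 0 (n - 2)) by apply: valid_w0_word; lia.
have := G_descending valid_w0 desc_w0.
rewrite -lmul_word_cat lmul_w0_sprod_rev_iota //.
suff -> : G (lmul_word (iota 1 n.-1) (w0 n)) = psi_prod n 0 (n - 2) by [].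
apply: DQ_word_uniq valid_iota1 (G_descending valid_iota1 desc_iota) _.
rewrite G_QGroth.1 Gtop_psi_prod; last by lia.
have -> : n.-1 = (n - 2).+1 by lia.
by apply: DQ_word_psi_prodS; lia.
Qed.

Lemma G_sprod_iota : G (sprod n (iota 1 n.-1)) = psi1.
Proof.
have valid_w0 : valid_word n (w0_word 1 n.-1) by apply: valid_w0_word; lia.
have := G_descending valid_w0 (descending_to_sprod_iota n_ge3).
rewrite lmul_w0_sprod_iota // => word.
apply: DQ_word_uniq valid_w0 word _.
rewrite G_w0 omega_psi_prod; last by lia.
rewrite -[X in DQ_word _ _ X]mulr1; apply: DQ_wordMl.
  by move=> i /mem_w0_word i_range; apply: s_eta_psi1; lia.
by have := @DQ_word_psi_prod n 1 n.-1 ltac:(lia); rewrite -subn2.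
Qed.

Lemma G_tr : G (tr n 1 n) = psi1 * omega_eta (G (sprod n (rev (iota 1 (n - 2))))).
Proof.
have valid_w0 : valid_word n (w0_word 1 (n - 2)) by apply: valid_w0_word; lia.
have := G_descending valid_w0 (descending_to_tr n_ge3).
rewrite lmul_w0_tr // => word.
apply: DQ_word_uniq valid_w0 word _.
rewrite G_w0; apply: DQ_wordMl.
  by move=> i /mem_w0_word i_range; apply: s_eta_psi1; lia.
rewrite w0_word_shift; apply: DQ_word_omega DQ_word_G_sprod_rev_iota.
by move=> i /mem_w0_word i_range; lia.
Qed.

End Proposition.

Theorem proposition5p2 (n : nat) (hn : (3 <= n)%N) (G : 'S_n -> Ring n) :
  is_QGroth G ->
  G (tr n 1 n) =
    G (sprod n (iota 1 n.-1)) * omega_eta (G (sprod n (rev (iota 1 (n - 2)%N)))).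
Proof. by move=> G_QGroth; rewrite (G_tr hn G_QGroth) (G_sprod_iota hn G_QGroth). Qed.
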